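(* (a) For any alphabet and any words $x,y$, if $y\in x\,\text{ш}\,x^R$ then $y$ is an abelian square. (b) If $y\in\{0,1\}^*$ is an abelian square, then there exists a word $x\in\{0,1\}^*$ such that $y\in x\,\text{ш}\,x^R$.
   Context: $x^R$ denotes the reversal of $x$. For words $x,y$, the (ordinary) shuffle $x \,\text{ш}\, y$ is the finite set of all words $z = x_1y_1x_2y_2\cdots x_ny_n$ for some $n\ge 1$ and words $x_1,\dots,x_n,y_1,\dots,y_n$ (possibly empty) with $x=x_1\cdots x_n$ and $y=y_1\cdots y_n$. An abelian square is a word of the form $uu'$ where $u'$ is a permutation (rearrangement of the letters) of $u$. *)

From mathcomp Require Import all_boot.
Set Implicit Arguments. Unset Strict Implicit. Unset Printing Implicit Defensive.

Definition interleave (T : Type) (xs ys : seq (seq T)) : seq T :=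
  flatten [seq p.1 ++ p.2 | p <- zip xs ys].

(* z is in the (ordinary) shuffle x ш y: z = x1 y1 x2 y2 ... xn yn with
   n >= 1, x = x1...xn, y = y1...yn (the pieces possibly empty). *)
Definition in_shuffle (T : Type) (x y z : seq T) : Prop :=
  exists (xs ys : seq (seq T)),
    [/\ size xs = size ys, 0 < size xs, flatten xs = x, flatten ys = y
      & z = interleave xs ys].

Definition abelian_square (T : eqType) (y : seq T) : Prop :=
  exists u u' : seq T, y = u ++ u' /\ perm_eq u u'.

From mathcomp Require Import all_boot.
From mathcomp Require Import zify.

(* Proof outline.
   (a) If y = x1 y1 ... xn yn with x = x1...xn and x^R = y1...yn, then y is
   a permutation of x x^R, and every prefix of y is a permutation of a prefix
   of x followed by a prefix of x^R.  For the prefix of length |x| these two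
   prefixes have complementary lengths i + j = |x|, so together they are
   x[0,i) and the reversal of x[i,|x|): a permutation of x.  The remaining
   suffix of y is then a permutation of x^R, hence of x, and y is an abelian
   square.
   (b) Over {0,1}, let y = u v with v a permutation of u.  Sending each 0 of u
   and each 1 of v to the left word and the other letters to the right word
   exhibits y in the shuffle of x = 0^a 1^b and 1^b 0^a = x^R, where a and b
   count the 0s and 1s of u (equivalently of v).  This rests on two general
   facts: every word w lies in (filter p w) ш (filter (~p) w), and shuffles
   are compatible with concatenation. *)

Section Interleave.
Context {T : Type}.
Implicit Types (a b w x y z : seq T) (xs ys : seq (seq T)).

Lemma interleave_cons a b xs ys :
  interleave (a :: xs) (b :: ys) = a ++ b ++ interleave xs ys.
Proof. by rewrite /interleave /= catA. Qed.

Lemma interleave_cat xs1 xs2 ys1 ys2 : size xs1 = size ys1 ->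
  interleave (xs1 ++ xs2) (ys1 ++ ys2) = interleave xs1 ys1 ++ interleave xs2 ys2.
Proof. by move=> Hs; rewrite /interleave zip_cat // map_cat flatten_cat. Qed.

Lemma in_shuffle_nil : in_shuffle [::] [::] ([::] : seq T).
Proof. by exists [:: [::]], [:: [::]]. Qed.

Lemma in_shuffle_cat {x1 y1 z1 x2 y2 z2} :
  in_shuffle x1 y1 z1 -> in_shuffle x2 y2 z2 ->
  in_shuffle (x1 ++ x2) (y1 ++ y2) (z1 ++ z2).
Proof.
move=> [xs1 [ys1 [Hs1 Hp1 <- <- ->]]] [xs2 [ys2 [Hs2 _ <- <- ->]]].
exists (xs1 ++ xs2), (ys1 ++ ys2); split.
- by rewrite !size_cat Hs1 Hs2.
- by rewrite size_cat ltn_addr.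
- exact: flatten_cat.
- exact: flatten_cat.
- by rewrite interleave_cat.
Qed.

Lemma in_shuffle_filter (p : pred T) w :
  in_shuffle (filter p w) (filter (predC p) w) w.
Proof.
elim: w => [|c w IH] /=; first exact: in_shuffle_nil.
have Hc : in_shuffle (filter p [:: c]) (filter (predC p) [:: c]) [:: c].
  by exists [:: filter p [:: c]], [:: filter (predC p) [:: c]]; split;
     rewrite //= /interleave /= !cats0; case: (p c).
by move: (in_shuffle_cat Hc IH) => /=; case: (p c).
Qed.

End Interleave.

Section Permutations.
Context {T : eqType}.
Implicit Types (x z : seq T) (xs ys : seq (seq T)).

Lemma perm_interleave xs ys : size xs = size ys ->
  perm_eq (interleave xs ys) (flatten xs ++ flatten ys).
Proof.
elim: xs ys => [|a xs IH] [|b ys] //= [] Hs.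
rewrite interleave_cons -catA perm_cat2l perm_sym perm_catCA perm_cat2l perm_sym.
exact: IH.
Qed.

Lemma perm_take_interleave xs ys k : exists i j,
  [/\ i <= size (flatten xs), j <= size (flatten ys)
    & perm_eq (take k (interleave xs ys)) (take i (flatten xs) ++ take j (flatten ys))].
Proof.
elim: xs ys k => [|a xs IH] [|b ys] k; try by exists 0, 0; rewrite /interleave /= ?take0.
rewrite interleave_cons /= !size_cat take_cat.
have take_prefix (s t : seq T) m : take (size s + m) (s ++ t) = s ++ take m t.
  by rewrite takeD take_size_cat // drop_size_cat.
case: (ltnP k (size a)) => Hka.
  exists k, 0; rewrite take0 cats0 takel_cat; last exact: ltnW.
  by split=> //; lia.
rewrite /= take_cat; case: (ltnP (k - size a) (size b)) => Hkb.
  exists (size a), (k - size a); rewrite take_size_cat // takel_cat; last exact: ltnW.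
  by split=> //; lia.
have [i [j [Hi Hj Hp]]] := IH ys (k - size a - size b).
exists (size a + i), (size b + j); rewrite /= !take_prefix.
split; [lia | lia |].
by rewrite -catA perm_cat2l perm_sym perm_catCA perm_cat2l perm_sym.
Qed.

Lemma perm_take_take_rev x i j : i + j = size x ->
  perm_eq (take i x ++ take j (rev x)) x.
Proof.
move=> Hij; rewrite take_rev (_ : size x - j = i); last by lia.
by rewrite -{3}(cat_take_drop i x) perm_cat2l perm_rev.
Qed.

Lemma in_shuffle_rev_abelian_square x z :
  in_shuffle x (rev x) z -> abelian_square z.
Proof.
move=> [xs [ys [Hs _ Hx Hy Hz]]]; set n := size x.
have Hperm : perm_eq z (x ++ rev x) by rewrite Hz -Hy -Hx perm_interleave.
have [i [j [Hi Hj Hp]]] := perm_take_interleave xs ys n.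
rewrite -Hz Hx Hy size_rev in Hp Hi Hj.
have Hn : n <= size z by rewrite (perm_size Hperm) size_cat leq_addr.
have Hij : i + j = n.
  by have := perm_size Hp; rewrite size_cat !size_takel ?size_rev.
have Hpre : perm_eq (take n z) x := perm_trans Hp (perm_take_take_rev x i j Hij).
have Hsuf : perm_eq (drop n z) x.
  rewrite -(perm_cat2l x); apply: perm_trans (_ : perm_eq _ (take n z ++ drop n z)) _.
    by rewrite perm_cat2r perm_sym.
  by rewrite cat_take_drop (perm_trans Hperm) // perm_cat2l perm_rev.
exists (take n z), (drop n z); split; first by rewrite cat_take_drop.
by rewrite (perm_trans Hpre) // perm_sym.
Qed.

Lemma filter_pred1_nseq (c : T) (s : seq T) :
  filter (pred1 c) s = nseq (count_mem c s) c.
Proof. by elim: s => //= d s ->; case: eqP => [->|]. Qed.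

End Permutations.

(* Part (b): over {0,1} every abelian square u v lies in x ш x^R, with
   x = (0s of u) (1s of v); then x^R = (1s of u) (0s of v). *)
Lemma abelian_square_in_shuffle_rev (y : seq bool) :
  abelian_square y -> exists x : seq bool, in_shuffle x (rev x) y.
Proof.
move=> [u [v [-> Huv]]].
have compl b : predC (pred1 b) =1 pred1 (~~ b) by case: b; case.
have Hu := in_shuffle_filter (pred1 false) u.
have Hv := in_shuffle_filter (pred1 true) v.
rewrite (eq_filter (compl false)) in Hu; rewrite (eq_filter (compl true)) in Hv.
exists (filter (pred1 false) u ++ filter (pred1 true) v).
suff -> : rev (filter (pred1 false) u ++ filter (pred1 true) v)
          = filter (pred1 true) u ++ filter (pred1 false) v by exact: in_shuffle_cat.
by rewrite rev_cat !filter_pred1_nseq !rev_nseq !(permP Huv).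
Qed.

Theorem mainTheorem4 :
  (forall (T : eqType) (x y : seq T),
      in_shuffle x (rev x) y -> abelian_square y) /\
  (forall y : seq bool,
      abelian_square y -> exists x : seq bool, in_shuffle x (rev x) y).
Proof.
split.
- exact: @in_shuffle_rev_abelian_square.
- exact: abelian_square_in_shuffle_rev.
Qed.
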